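(* Let $M$ be a matroid on $E=\{0,\dots,n\}$ with connected components $M_1,\dots,M_k$ on $E_1,\dots,E_k$ (so $M=M_1\oplus\cdots\oplus M_k$, $E=\bigsqcup E_i$). For each $i$, let $f_i:X_E\to X_{E_i}$ be the toric morphism induced by the projection $\mathbb R^E/\mathbb R\mathbf 1\to\mathbb R^{E_i}/\mathbb R\mathbf 1$. Then \[ [\mathcal S_M]=\sum_{i=1}^kf_i^*[\mathcal S_{M_i}]\quad\text{and}\quad[\mathcal Q_M]=\sum_{i=1}^kf_i^*[\mathcal Q_{M_i}]\quad\text{in }K_T^0(X_E). \]
   Context: For a finite nonempty set $F$, $X_F$ is the permutohedral variety, the toric variety of the fan in $\mathbb R^F/\mathbb R\mathbf 1$ with cones $\operatorname{Cone}(\overline{\mathbf e}_{S_1},\dots,\overline{\mathbf e}_{S_k})$ for chains of nonempty proper subsets of $F$; it is a $T=(\mathbb C^* )^E$-variety (via projection $T\to(\mathbb C^* )^F$ when $F\subseteq E$), with fixed points $p_\sigma$ indexed by permutations of $F$, and $K_T^0(X_F)$ embeds in a product of Laurent polynomial rings by restriction. For a matroid $N$ on $F$, $B_\sigma(N)$ is the lexicographically first basis for the order given by $\sigma$, and $[\mathcal S_N],[\mathcal Q_N]$ restrict at $p_\sigma$ to $\sum_{i\in B_\sigma(N)}T_i^{-1}$, $\sum_{i\in F\setminus B_\sigma(N)}T_i^{-1}$. A matroid is connected if it is not a direct sum of two matroids on nonempty ground sets; every matroid is uniquely a direct sum of connected matroids, its connected components. *)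

From HB Require Import structures.
From mathcomp Require Import all_boot all_order all_fingroup all_algebra.
From mathcomp Require Import mpoly.
Set Implicit Arguments. Unset Strict Implicit. Unset Printing Implicit Defensive.
Import GRing.Theory.

Section Defs.
Variable n : nat.
Local Notation E := 'I_n.+1.

Definition is_matroid (A : {set E}) (BB : {set {set E}}) : Prop :=
  [/\ BB != set0,
      forall B, B \in BB -> B \subset A &
      forall B1 B2, B1 \in BB -> B2 \in BB -> forall x, x \in B1 :\: B2 ->
        exists2 y, y \in B2 :\: B1 & (y |: (B1 :\ x)) \in BB].

Definition dsum2 (B1 B2 : {set {set E}}) : {set {set E}} :=
  [set X :|: Y | X in B1, Y in B2].

Definition connected_matroid (A : {set E}) (BB : {set {set E}}) : Prop :=
  is_matroid A BB /\
  ~ (exists A1 A2 : {set E}, exists B1 B2 : {set {set E}},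
       [/\ A1 != set0, A2 != set0, [disjoint A1 & A2] & A1 :|: A2 = A] /\
       [/\ is_matroid A1 B1, is_matroid A2 B2 & BB = dsum2 B1 B2]).

Definition is_dsum (k : nat) (Bi : 'I_k -> {set {set E}}) (BB : {set {set E}}) : Prop :=
  forall B : {set E}, (B \in BB) <-> (exists f : 'I_k -> {set E},
      (forall i, f i \in Bi i) /\ B = \bigcup_(i < k) f i).

Definition connected_components (A : {set E}) (BB : {set {set E}})
    (k : nat) (Ei : 'I_k -> {set E}) (Bi : 'I_k -> {set {set E}}) : Prop :=
  [/\ forall i, Ei i != set0,
      forall i j, i != j -> [disjoint Ei i & Ei j],
      \bigcup_(i < k) Ei i = A,
      forall i, connected_matroid (Ei i) (Bi i) &
      is_dsum Bi BB].

(* Total orders on a subset F of E are encoded by sequences listing the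
   elements of F in increasing order; these index the fixed points of X_F. *)
Definition is_order_of (F : {set E}) (s : seq E) : bool := perm_eq s (enum F).

Definition perm_order (sigma : {perm E}) : seq E := [seq sigma i | i <- enum 'I_n.+1].

(* The induced order on a subset F (the fixed point f_F(p_sigma)). *)
Definition restr_order (F : {set E}) (s : seq E) : seq E := [seq x <- s | x \in F].

Fixpoint lexle (a b : seq nat) : bool :=
  match a, b with
  | [::], _ => true
  | _ :: _, [::] => false
  | x :: a', y :: b' => (x < y) || ((x == y) && lexle a' b')
  end.

Definition word (s : seq E) (X : {set E}) : seq nat :=
  [seq index x s | x <- s & x \in X].

Definition lexfirst_basis (s : seq E) (BB : {set {set E}}) : {set E} :=
  odflt set0 [pick B in BB | [forall B', (B' \in BB) ==> lexle (word s B) (word s B')]].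

(* Laurent polynomial ring Z[T_0^{+-1},...,T_n^{+-1}]: we work inside its
   subring Z[T_0^{-1},...,T_n^{-1}], identified with {mpoly int[n.+1]}
   via 'X_i = T_i^{-1}. *)
Definition Lring := {mpoly int[n.+1]}.
Definition Tinv (i : E) : Lring := 'X_i.

(* Restrictions of [S_N] and [Q_N] (N matroid on F with bases BB) at the
   fixed point p_s of X_F. *)
Definition locS (BB : {set {set E}}) (s : seq E) : Lring :=
  (\sum_(i in lexfirst_basis s BB) Tinv i)%R.
Definition locQ (F : {set E}) (BB : {set {set E}}) (s : seq E) : Lring :=
  (\sum_(i in F :\: lexfirst_basis s BB) Tinv i)%R.

(* Equivariant pullback along f_F : X_E -> X_F, on localizations:
   (f_F^* xi)|_{p_s} = xi|_{p_{s restricted to F}}. *)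
Definition pullback (F : {set E}) (xi : seq E -> Lring) : seq E -> Lring :=
  fun s => xi (restr_order F s).

End Defs.

From HB Require Import structures.
From mathcomp Require Import all_boot all_order all_fingroup all_algebra.
From mathcomp Require Import mpoly.
Import GRing.Theory.
Set Implicit Arguments. Unset Strict Implicit.

(* For bases of a matroid, which all have the same size, comparing their words
   lexicographically amounts to asking which of the two sets contains the first
   element of the order where they differ.  For a direct sum, the first
   difference between two unions of bases of the summands lies in a single
   block, so the lexicographically first basis of M is the union of the
   lexicographically first bases of the M_i for the induced orders.  The
   restrictions of [S_M] and [Q_M] to p_sigma are then sums over the disjoint
   blocks of that basis and of its complement. *)

Section Blocks.
Variables (T : finType) (k : nat) (Ei : 'I_k -> {set T}).
Hypothesis Ei_disj : forall i j, i != j -> [disjoint Ei i & Ei j].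

Lemma mem_bigcup_block (Z : 'I_k -> {set T}) j a :
  (forall i, Z i \subset Ei i) -> a \in Ei j -> (a \in \bigcup_(i < k) Z i) = (a \in Z j).
Proof.
move=> sZE aEj; apply/bigcupP/idP => [[i _ aZi] | aZj]; last by exists j.
case: (eqVneq i j) => [<- // | ij].
by have := disjointFr (Ei_disj ij) (subsetP (sZE i) _ aZi); rewrite aEj.
Qed.

Lemma setD_bigcup_block (Z : 'I_k -> {set T}) : (forall i, Z i \subset Ei i) ->
  \bigcup_(i < k) Ei i :\: \bigcup_(i < k) Z i = \bigcup_(i < k) (Ei i :\: Z i).
Proof.
move=> sZE; apply/setP => x.
apply/setDP/bigcupP => [[/bigcupP[j _ xEj] xZ] | [j _ /setDP[xEj xZj]]].
  by exists j => //; apply/setDP; rewrite -(mem_bigcup_block sZE xEj).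
by split; [apply/bigcupP; exists j | rewrite (mem_bigcup_block sZE xEj)].
Qed.

End Blocks.

Section LexSet.
Variable T : finType.
Implicit Types (s : seq T) (X Y : {set T}).

Fixpoint lexsetle s X Y : bool :=
  if s is a :: s' then
    if (a \in X) != (a \in Y) then a \in X else lexsetle s' X Y
  else true.

Lemma lexsetle_refl s X : lexsetle s X X.
Proof. by elim: s => //= a s ->; rewrite eqxx. Qed.

Lemma lexsetle_total s X Y : lexsetle s X Y || lexsetle s Y X.
Proof. by elim: s => //= a s IH; case: (a \in X); case: (a \in Y). Qed.

Lemma lexsetle_trans s : transitive (lexsetle s).
Proof.
move=> Y X Z; elim: s => //= a s IH.
by case: (a \in X); case: (a \in Y); case: (a \in Z) => //=; apply: IH.
Qed.

Lemma lexsetle_anti s X Y : lexsetle s X Y -> lexsetle s Y X ->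
  {in s, forall x, (x \in X) = (x \in Y)}.
Proof.
elim: s => //= a s IH.
case aX: (a \in X); case aY: (a \in Y) => //= leXY leYX x;
  rewrite inE => /predU1P[-> | xs]; rewrite ?aX ?aY //; exact: IH.
Qed.

Lemma lexsetle_filter (F : {set T}) s X Y : X \subset F -> Y \subset F ->
  lexsetle [seq x <- s | x \in F] X Y = lexsetle s X Y.
Proof.
move=> /subsetP sXF /subsetP sYF; elim: s => //= a s IH.
case aF: (a \in F) => /=; rewrite IH //.
have /negbTE -> : a \notin X by apply: contraFN aF; apply: sXF.
by have /negbTE -> : a \notin Y by apply: contraFN aF; apply: sYF.
Qed.

Lemma lexsetle_min_exists s (BB : {set {set T}}) : BB != set0 ->
  exists2 B, B \in BB & {in BB, forall B', lexsetle s B B'}.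
Proof.
move=> /set0Pn[B0 B0in].
have := sort_sorted (@lexsetle_total s) (enum BB).
have mem_sorted := mem_sort (lexsetle s) (enum BB).
case: (sort _ _) mem_sorted => [|B l] mem_sorted /=.
  by have := mem_sorted B0; rewrite in_nil mem_enum B0in.
move=> /(order_path_min (@lexsetle_trans s)) /allP Bmin.
exists B; first by rewrite -mem_enum -mem_sorted mem_head.
move=> B'; rewrite -mem_enum -mem_sorted inE => /predU1P[-> | /Bmin //].
exact: lexsetle_refl.
Qed.

Lemma lexsetle_bigcup k (Ei X Y : 'I_k -> {set T}) s :
  (forall i j, i != j -> [disjoint Ei i & Ei j]) ->
  (forall i, X i \subset Ei i) -> (forall i, Y i \subset Ei i) ->
  (forall i, lexsetle s (X i) (Y i)) ->
  lexsetle s (\bigcup_(i < k) X i) (\bigcup_(i < k) Y i).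
Proof.
move=> Ei_disj sXE sYE; elim: s => //= a s IH leXY.
have outside (Z : 'I_k -> {set T}) i :
    Z i \subset Ei i -> a \notin Ei i -> (a \in Z i) = false.
  by move=> sZE; apply: contraNF => /(subsetP sZE).
have leXY_off i : a \notin Ei i -> lexsetle s (X i) (Y i).
  by move=> aEi; have := leXY i; rewrite /= (outside X) ?(outside Y).
case: (pickP (fun i => a \in Ei i)) => [j aEj | /= aE].
  rewrite (mem_bigcup_block Ei_disj sXE aEj) (mem_bigcup_block Ei_disj sYE aEj).
  have := leXY j; rewrite /=; case: ifP => // _ leXYj.
  apply: IH => i; case: (eqVneq i j) => [-> // | ij]; apply: leXY_off.
  by apply: contraL aEj => /(disjointFr (Ei_disj _ _ ij)) ->.
have notin_bigcup (Z : 'I_k -> {set T}) :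
    (forall i, Z i \subset Ei i) -> (a \in \bigcup_(i < k) Z i) = false.
  by move=> sZE; apply/bigcupP => -[i _ /(subsetP (sZE i))]; rewrite aE.
by rewrite !notin_bigcup //=; apply: IH => i; apply: leXY_off; rewrite aE.
Qed.

End LexSet.

Section LexFirstBasis.
Variable n : nat.
Local Notation E := 'I_n.+1.
Implicit Types (s : seq E) (X Y : {set E}) (BB : {set {set E}}).

Lemma lexle_map_succ (u v : seq nat) : lexle (map succn u) (map succn v) = lexle u v.
Proof. by elim: u v => [|x u IH] [|y v] //=; rewrite ltnS eqSS IH. Qed.

Lemma word_cons (a : E) s X : a \notin s ->
  word (a :: s) X = (if a \in X then [:: 0] else [::]) ++ map succn (word s X).
Proof.
move=> a_s; rewrite /word /=.
have shift : [seq (if a == x then 0 else (index x s).+1) | x <- s & x \in X] =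
             map succn [seq index x s | x <- s & x \in X].
  rewrite -map_comp; apply/eq_in_map => x; rewrite mem_filter => /andP[_ xs] /=.
  by case: eqP => // ax; rewrite ax xs in a_s.
by case: (a \in X); rewrite /= ?eqxx shift.
Qed.

Lemma lexle_word s X Y : uniq s -> size (word s X) = size (word s Y) ->
  lexle (word s X) (word s Y) = lexsetle s X Y.
Proof.
elim: s => [|a s IH] //= /andP[a_s s_uniq]; rewrite !word_cons //.
case: (a \in X); case: (a \in Y); rewrite /= ?(size_map succn) ?lexle_map_succ.
- by case=> /(IH s_uniq).
- by case: (word s Y).
- by case: (word s X).
- exact: IH.
Qed.

Lemma size_word s X : uniq s -> {subset X <= s} -> size (word s X) = #|X|.
Proof.
move=> s_uniq sXs; rewrite /word size_map cardE; apply: perm_size.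
apply: uniq_perm; [exact: filter_uniq | exact: enum_uniq |].
by move=> x; rewrite mem_filter mem_enum andb_idr //; apply: sXs.
Qed.

Lemma matroid_basis_card A BB :
  is_matroid A BB -> {in BB &, forall B1 B2 : {set E}, #|B1| = #|B2|}.
Proof.
case=> _ _ exchange.
suff le_diff m B1 B2 : B1 \in BB -> B2 \in BB -> #|B1 :\: B2| = m -> m <= #|B2 :\: B1|.
  move=> B1 B2 B1in B2in; rewrite -(cardsID B2 B1) -(cardsID B1 B2) setIC.
  by congr (_ + _); apply/eqP; rewrite eqn_leq !(le_diff _ _ _ _ _ erefl).
elim: m B1 B2 => // m IH B1 B2 B1in B2in card_diff.
have [x xD] : exists x, x \in B1 :\: B2 by apply/set0Pn; rewrite -card_gt0 card_diff.
have [y yD B1'in] := exchange _ _ B1in B2in x xD.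
move: (xD) (yD); rewrite !inE => /andP[xB2 xB1] /andP[yB1 yB2].
have card_diff' : #|(y |: (B1 :\ x)) :\: B2| = m.
  have -> : (y |: (B1 :\ x)) :\: B2 = (B1 :\: B2) :\ x.
    apply/setP => z; rewrite !inE.
    by case: (eqVneq z y) => [-> | _] /=; [rewrite yB2 andbF | rewrite andbCA].
  by move: card_diff; rewrite (cardsD1 x) xD => -[].
have -> : B2 :\: B1 = y |: (B2 :\: (y |: (B1 :\ x))).
  apply/setP => z; rewrite !inE; case: (eqVneq z y) => [-> | _]; first by rewrite yB1.
  by case: (eqVneq z x) => [-> | //]; rewrite (negbTE xB2) andbF.
by rewrite cardsU1 !inE eqxx /= add1n ltnS (IH _ _ B1'in B2in card_diff').
Qed.

Lemma lexfirst_basisP A BB s : is_matroid A BB -> uniq s -> {subset A <= s} ->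
  lexfirst_basis s BB \in BB /\ {in BB, forall B, lexsetle s (lexfirst_basis s BB) B}.
Proof.
move=> BBmat s_uniq sAs; have [BB_n0 sBA _] := BBmat.
have sBs B : B \in BB -> {subset B <= s} by move=> /sBA/subsetP sBA' x /sBA'/sAs.
have lexleE B B' : B \in BB -> B' \in BB ->
    lexle (word s B) (word s B') = lexsetle s B B'.
  move=> Bin B'in; apply: lexle_word => //.
  rewrite (size_word s_uniq (sBs _ Bin)) (size_word s_uniq (sBs _ B'in)).
  exact: (matroid_basis_card BBmat Bin B'in).
rewrite /lexfirst_basis; case: pickP => [B /andP[Bin /forallP Bmin] | no_min] /=.
  by split=> // B' B'in; rewrite -lexleE // (implyP (Bmin B')).
have [B Bin Bmin] := lexsetle_min_exists s BB_n0.
case/negP: (negbT (no_min B)); rewrite Bin; apply/forallP => B'.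
by apply/implyP => B'in; rewrite lexleE // Bmin.
Qed.

Lemma lexfirst_basis_restrP F BB s : is_matroid F BB -> uniq s -> {subset F <= s} ->
  lexfirst_basis (restr_order F s) BB \in BB /\
  {in BB, forall B, lexsetle s (lexfirst_basis (restr_order F s) BB) B}.
Proof.
move=> BBmat s_uniq sFs; have [_ sBF _] := BBmat.
have sFr : {subset F <= restr_order F s} by move=> x xF; rewrite mem_filter xF sFs.
have [Lin Lmin] := lexfirst_basisP BBmat (filter_uniq _ s_uniq) sFr.
by split=> // B Bin; rewrite -(lexsetle_filter _ (sBF _ Lin) (sBF _ Bin)) Lmin.
Qed.

Section DirectSum.
Variables (k : nat) (BM : {set {set E}}) (Ei : 'I_k -> {set E}).
Variables (Bi : 'I_k -> {set {set E}}) (s : seq E).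
Hypotheses (Bi_matroid : forall i, is_matroid (Ei i) (Bi i))
  (Ei_disj : forall i j, i != j -> [disjoint Ei i & Ei j])
  (BM_dsum : is_dsum Bi BM) (s_uniq : uniq s) (s_full : forall x, x \in s).

Local Notation L i := (lexfirst_basis (restr_order (Ei i) s) (Bi i)).

Lemma basis_sub_block i B : B \in Bi i -> B \subset Ei i.
Proof. by have [_ sBE _] := Bi_matroid i; apply: sBE. Qed.

Lemma lexfirst_basis_blockP i : L i \in Bi i /\ {in Bi i, forall B, lexsetle s (L i) B}.
Proof. exact: lexfirst_basis_restrP (Bi_matroid i) s_uniq (fun x _ => s_full x). Qed.

Lemma lexfirst_basis_block_sub i : L i \subset Ei i.
Proof. exact/basis_sub_block/(lexfirst_basis_blockP i).1. Qed.

Lemma lexfirst_basis_block_disj i j : i != j -> [disjoint L i & L j].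
Proof.
move=> ij; apply: disjointWl (lexfirst_basis_block_sub i) _.
exact: disjointWr (lexfirst_basis_block_sub j) (Ei_disj ij).
Qed.

Lemma lexfirst_basis_dsum A :
  is_matroid A BM -> lexfirst_basis s BM = \bigcup_(i < k) L i.
Proof.
move=> BM_matroid.
have [LM_in LM_min] := lexfirst_basisP BM_matroid s_uniq (fun x _ => s_full x).
have UL_in : \bigcup_(i < k) L i \in BM.
  apply/BM_dsum; exists (fun i => L i).
  by split=> // i; apply: (lexfirst_basis_blockP i).1.
apply/setP => x; apply: (lexsetle_anti (LM_min _ UL_in)) (s_full x).
have [f [f_in ->]] := (BM_dsum (lexfirst_basis s BM)).1 LM_in.
apply: lexsetle_bigcup Ei_disj lexfirst_basis_block_sub _ _ => i.
  exact: basis_sub_block (f_in i).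
exact: (lexfirst_basis_blockP i).2 _ (f_in i).
Qed.

Lemma locS_dsum A : is_matroid A BM ->
  locS BM s = (\sum_(i < k) pullback (Ei i) (locS (Bi i)) s)%R.
Proof.
move=> BM_matroid; rewrite /locS /pullback (lexfirst_basis_dsum BM_matroid).
exact: partition_disjoint_bigcup lexfirst_basis_block_disj.
Qed.

Lemma locQ_dsum A : is_matroid A BM -> \bigcup_(i < k) Ei i = A ->
  locQ A BM s = (\sum_(i < k) pullback (Ei i) (locQ (Ei i) (Bi i)) s)%R.
Proof.
move=> BM_matroid UE; rewrite /locQ /pullback (lexfirst_basis_dsum BM_matroid) -UE.
rewrite setD_bigcup_block //; last exact: lexfirst_basis_block_sub.
apply: partition_disjoint_bigcup => i j ij.
exact: disjointWl (subsetDl _ _) (disjointWr (subsetDl _ _) (Ei_disj ij)).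
Qed.

End DirectSum.

Lemma perm_order_uniq (sigma : {perm E}) : uniq (perm_order sigma).
Proof. by rewrite map_inj_uniq ?enum_uniq //; apply: perm_inj. Qed.

Lemma mem_perm_order (sigma : {perm E}) x : x \in perm_order sigma.
Proof. by apply/mapP; exists (sigma^-1 x)%g; rewrite ?mem_enum ?permKV. Qed.

End LexFirstBasis.

Theorem proposition5p13 (n : nat) (BM : {set {set 'I_n.+1}})
    (k : nat) (Ei : 'I_k -> {set 'I_n.+1}) (Bi : 'I_k -> {set {set 'I_n.+1}}) :
  is_matroid [set: 'I_n.+1] BM ->
  connected_components [set: 'I_n.+1] BM Ei Bi ->
  (forall sigma : {perm 'I_n.+1},
     locS BM (perm_order sigma)
     = (\sum_(i < k) pullback (Ei i) (locS (Bi i)) (perm_order sigma))%R)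
  /\
  (forall sigma : {perm 'I_n.+1},
     locQ [set: 'I_n.+1] BM (perm_order sigma)
     = (\sum_(i < k) pullback (Ei i) (locQ (Ei i) (Bi i)) (perm_order sigma))%R).
Proof.
move=> BM_matroid [_ Ei_disj UE Bi_conn BM_dsum].
have Bi_matroid i : is_matroid (Ei i) (Bi i) := (Bi_conn i).1.
split=> sigma.
- exact: (locS_dsum Bi_matroid Ei_disj BM_dsum (perm_order_uniq sigma)
    (mem_perm_order sigma) BM_matroid).
- exact: (locQ_dsum Bi_matroid Ei_disj BM_dsum (perm_order_uniq sigma)
    (mem_perm_order sigma) BM_matroid UE).
Qed.
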